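(* Let $h:(0,\infty)\to\mathbb{R}$ be a differentiable, monotonically increasing (non-decreasing) function satisfying $h(1/t)\ge \frac{1}{t}\,h'(1/t)$ for all $t>0$, where $h'$ denotes the derivative of $h$. Define $g(t)=\min\{h(t),\,t\,h(1/t)\}$ for $t>0$. Then $g$ is monotonically increasing on $(0,\infty)$, i.e. $g(t_1)\ge g(t_2)$ whenever $t_1\ge t_2>0$.
   Context: Here $h$ plays the role of a parametrized function $h_{\boldsymbol{\theta}}$ (for a fixed parameter $\boldsymbol{\theta}$) and $g$ that of $g_{\boldsymbol{\theta}}$. *)

From Stdlib Require Import Reals.
From Coquelicot Require Import Coquelicot.
Open Scope R_scope.

Definition g_of (h : R -> R) (t : R) : R := Rmin (h t) (t * h (/ t)).

(** The map [k t = t * h (1/t)] has derivative [h (1/t) - h'(1/t) / t], which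
    the hypothesis makes nonnegative, so [k] is nondecreasing on [(0, +oo)];
    [g] is the pointwise minimum of the nondecreasing maps [h] and [k]. *)

From Stdlib Require Import Reals Lra.
From Coquelicot Require Import Coquelicot.
Open Scope R_scope.

Lemma nondecreasing_of_derive_nonneg (f df : R -> R) (a b : R) :
  a <= b ->
  (forall x, a <= x <= b -> is_derive f x (df x)) ->
  (forall x, a <= x <= b -> 0 <= df x) ->
  f a <= f b.
Proof.
  intros Hab Hder Hpos.
  destruct (MVT_gen f a b df) as [c [Hc Hmvt]].
  - intros x Hx. apply Hder. rewrite Rmin_left, Rmax_right in Hx; lra.
  - intros x Hx. rewrite Rmin_left, Rmax_right in Hx by lra.
    apply continuity_pt_filterlim, (@ex_derive_continuous R_AbsRing R_NormedModule).
    exists (df x). apply Hder. lra.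
  - rewrite Rmin_left, Rmax_right in Hc by lra.
    assert (0 <= df c * (b - a)) by (apply Rmult_le_pos; [apply Hpos; lra | lra]).
    lra.
Qed.

Lemma is_derive_mul_comp_inv (f : R -> R) (t d : R) :
  t <> 0 -> is_derive f (/ t) d ->
  is_derive (fun x => x * f (/ x)) t (f (/ t) - d / t).
Proof.
  intros Ht Hf.
  assert (Hid : is_derive (fun x : R => x) t 1)
    by apply is_derive_Reals, derivable_pt_lim_id.
  pose proof (is_derive_inv _ _ _ Hid Ht) as Hinv.
  pose proof (is_derive_comp f (fun x => / x) t d _ Hf Hinv) as Hcomp.
  pose proof (is_derive_mult _ _ t 1 _ Hid Hcomp Rmult_comm) as Hprod.
  replace (f (/ t) - d / t) with (plus (mult 1 (f (/ t))) (mult t (scal (- 1 / t ^ 2) d))).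
  - exact Hprod.
  - unfold plus, mult, scal; simpl. unfold mult; simpl. field. exact Ht.
Qed.

Lemma Rmin_le_compat (a b c d : R) : a <= b -> c <= d -> Rmin a c <= Rmin b d.
Proof.
  intros Hab Hcd.
  apply Rle_trans with (Rmin b c); [apply Rle_min_compat_r | apply Rle_min_compat_l]; assumption.
Qed.

Theorem theorem3 (h : R -> R)
  (hdiff : forall t, 0 < t -> ex_derive h t)
  (hmono : forall t1 t2, 0 < t2 -> t2 <= t1 -> h t2 <= h t1)
  (hcond : forall t, 0 < t -> h (/ t) >= / t * Derive h (/ t)) :
  forall t1 t2, 0 < t2 -> t2 <= t1 -> g_of h t2 <= g_of h t1.
Proof.
  intros t1 t2 Ht2 Ht12.
  apply Rmin_le_compat; [now apply hmono |].
  apply (nondecreasing_of_derive_nonneg (fun x => x * h (/ x))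
           (fun x => h (/ x) - Derive h (/ x) / x)); [exact Ht12 | intros x Hx ..].
  - apply is_derive_mul_comp_inv; [lra |].
    apply Derive_correct, hdiff, Rinv_0_lt_compat. lra.
  - pose proof (hcond x ltac:(lra)). unfold Rdiv. lra.
Qed.
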